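(* Under the Standing Setup (see context), Algorithm 1 is well defined: for every $k\ge0$, given $x^k\in B[\bar x,\beta]$ a point $z^k\in B(\bar x,\delta)$ as in step (a) exists. Moreover, for all $k\ge 0$, $$x^{k+1}=P_{\lambda_k}f(x^k)\quad\text{and}\quad x^k\in B[\bar x,\beta],$$ and $\sum_{k}\|x^k-x^{k+1}\|^2<\infty$.
   Context: $B(x,r)$, $B[x,r]$: open and closed Euclidean balls. For $\mu>0$: $e_\mu f(x):=\min_y\{f(y)+\frac{1}{2\mu}\|y-x\|^2\}$ (Moreau envelope), $P_\mu f(x):=\operatorname{argmin}_y\{f(y)+\frac{1}{2\mu}\|y-x\|^2\}$ (proximal operator). $\partial f$: limiting subdifferential. $f$ is $\rho$-weakly convex on $U$ if $f(\alpha x+(1-\alpha)y)\le \alpha f(x)+(1-\alpha)f(y)+\frac{\rho\alpha(1-\alpha)}{2}\|x-y\|^2$ for all $x,y\in U$, $\alpha\in[0,1]$. Standing Fact (cited): if $f$ is $\rho$-weakly convex on $\mathbb{R}^n$, $\rho>0$, $0\in\partial f(\bar x)$ and $\mu\in(0,1/\rho)$, there is $\alpha>0$ such that on $B[\bar x,\alpha]$, $P_\mu f$ is single-valued, $1/(1-\mu\rho)$-Lipschitz, equal to $(I+\mu\partial f)^{-1}$, and $e_\mu f$ is $C^1$ with $\nabla e_\mu f(x)=\mu^{-1}(x-P_\mu f(x))$. Standing Setup: $f:\mathbb{R}^n\to\mathbb{R}\cup\{+\infty\}$ is proper, lower semicontinuous, bounded below and $\rho$-weakly convex on $\mathbb{R}^n$,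 $\rho>0$; $\bar x\in\operatorname{dom}f$ with $0\in\partial f(\bar x)$. Fix $\bar\lambda>0$ and bounded sequences $\{\gamma_k\},\{\lambda_k\}$ with $0<\bar\lambda<2\gamma_k<\lambda_k<1/\rho$ for all $k$. Let $\delta>0$ be such that, for every $k$, the Standing Fact holds on $B[\bar x,\delta]$ (i.e. $\delta$ is smaller than the corresponding radius $\alpha$) for $\mu=\gamma_k$ and $\mu=\lambda_k$, and (Assumption 1) the Moreau envelopes $e_{\gamma_k}f$ and $e_{\lambda_k}f$ are convex on $B[\bar x,\delta]$. For each $k$ let $L_k:=1+\frac{\lambda_k-\gamma_k}{\gamma_k}\bigl(1+\frac{1}{1-\gamma_k\rho}\bigr)$, pick $\sigma_k\in(0,2/L_k^2)$, set $\kappa_k:=1-2\sigma_k+\sigma_k^2L_k^2$, and let $\beta>0$ satisfy $\beta<\min\{\delta,\frac{\delta}{\sigma_k}(1-\sqrt{\kappa_k})\}$ for all $k$. Algorithm 1: choose $x^0\in B[\bar x,\beta]$. Given $x^k\in B[\bar x,\beta]$: (a) compute $z^k\in B(\bar x,\delta)$ with $z^k=x^k-(\lambda_k-\gamma_k)\nabla e_{\gamma_k}f(z^k)$; (b) set $x^{k+1}=z^k-\gamma_k(\lambda_k-\gamma_k)^{-1}(x^k-z^k)$. *)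

(* R^n is modelled as row vectors 'rV[R]_n with the EUCLIDEAN norm defined below
   (the library's own norm on matrices is the max-norm; topology/filters coincide). *)
From HB Require Import structures.
From mathcomp Require Import all_boot all_order all_algebra.
From mathcomp Require Import all_classical all_reals all_analysis.
Set Implicit Arguments. Unset Strict Implicit. Unset Printing Implicit Defensive.
Import Order.TTheory GRing.Theory Num.Theory.
Import numFieldNormedType.Exports.
Local Open Scope classical_set_scope.
Local Open Scope ring_scope.

Section Defs.
Context {R : realType} {n : nat}.
Local Notation V := 'rV[R]_n.

Definition dotv (u v : V) : R := \sum_(i < n) u ord0 i * v ord0 i.
Definition enorm (u : V) : R := Num.sqrt (dotv u u).

Definition oball (x : V) (r : R) : set V := [set y | enorm (y - x) < r].
Definition cball (x : V) (r : R) : set V := [set y | enorm (y - x) <= r].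

(* Moreau envelope e_mu f (real valued; finite when f is proper and bounded below) *)
Definition moreau (mu : R) (f : V -> \bar R) (x : V) : R :=
  fine (ereal_inf [set (f y + ((2 * mu)^-1 * enorm (y - x) ^+ 2)%:E)%E | y in setT]).

(* proximal operator P_mu f (x), as the (possibly empty/multi) argmin set *)
Definition prox (mu : R) (f : V -> \bar R) (x : V) : set V :=
  [set p | forall y, (f p + ((2 * mu)^-1 * enorm (p - x) ^+ 2)%:E <=
                      f y + ((2 * mu)^-1 * enorm (y - x) ^+ 2)%:E)%E].

Definition weakly_convex_on (rho : R) (U : set V) (f : V -> \bar R) : Prop :=
  forall x y, U x -> U y -> forall a : R, 0 <= a <= 1 ->
    (f (a *: x + (1 - a) *: y)%R <=
       a%:E * f x + (1 - a)%:E * f y + (rho * a * (1 - a) / 2 * enorm (x - y) ^+ 2)%:E)%E.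

Definition convex_fun_on (U : set V) (F : V -> R) : Prop :=
  forall x y, U x -> U y -> forall a : R, 0 <= a <= 1 ->
    F (a *: x + (1 - a) *: y) <= a * F x + (1 - a) * F y.

(* regular (Frechet) subdifferential: v is a regular subgradient of f at x iff
   f x is finite and liminf_{y -> x, y <> x} (f y - f x - <v, y - x>)/||y - x|| >= 0 *)
Definition frechet_subgrad (f : V -> \bar R) (x v : V) : Prop :=
  f x \is a fin_num /\
  forall eps : R, 0 < eps -> \forall y \near x,
     ((fine (f x) + dotv v (y - x) - eps * enorm (y - x))%:E <= f y)%E.

Definition limiting_subdiff (f : V -> \bar R) (x : V) : set V :=
  [set v | exists (xk vk : nat -> V),
     [/\ xk @ \oo --> x, (f \o xk) @ \oo --> f x, vk @ \oo --> v &
         forall k, frechet_subgrad f (xk k) (vk k)]].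

Definition is_gradient (F : V -> R) (x g : V) : Prop :=
  (fun h : V => (F (x + h) - F x - dotv g h) / enorm h) @ (0 : V)^' --> (0 : R).

(* Conclusions of the cited Standing Fact, holding on B[xbar, r] for parameter mu:
   P_mu f single-valued, 1/(1 - mu rho)-Lipschitz, equal to (I + mu df)^{-1},
   and e_mu f differentiable with gradient mu^{-1}(x - P_mu f(x))
   (continuity of the gradient then follows from the Lipschitz property). *)
Definition standing_fact (f : V -> \bar R) (rho : R) (xbar : V) (r mu : R) : Prop :=
  [/\ forall x, cball xbar r x -> exists p, prox mu f x = [set p],
      forall x y p q, cball xbar r x -> cball xbar r y ->
        prox mu f x p -> prox mu f y q ->
        enorm (p - q) <= (1 - mu * rho)^-1 * enorm (x - y),
      forall x, cball xbar r x ->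
        prox mu f x = [set p | limiting_subdiff f p (mu^-1 *: (x - p))] &
      forall x p, cball xbar r x -> prox mu f x p ->
        is_gradient (moreau mu f) x (mu^-1 *: (x - p))].

Definition step_a (f : V -> \bar R) (xbar : V) (delta gam lam : R) (x z : V) : Prop :=
  [/\ oball xbar delta z &
      exists g, is_gradient (moreau gam f) z g /\ z = x - (lam - gam) *: g].

End Defs.

Definition Lconst {R : realType} (rho gam lam : R) : R :=
  1 + (lam - gam) / gam * (1 + (1 - gam * rho)^-1).
Definition kappa {R : realType} (rho gam lam sig : R) : R :=
  1 - 2 * sig + sig ^+ 2 * (Lconst rho gam lam) ^+ 2.

(* Put z = (gam/lam) x + (1 - gam/lam) p with p = P_lam f(x).  On B[xbar,delta] the
   standing fact identifies P_lam f(x) = p with P_gam f(z) = p, so z solves step (a)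
   and then x^{k+1} = p; conversely, for any solution z of step (a) the gradient of
   e_gam f at z determines p.  Monotonicity of the gradient of the convex function
   e_gam f between xbar, where it vanishes, and z, together with lam >= 2 gam, gives
   |p - xbar| <= |x - xbar| as long as z lies in B[xbar,delta]; this proviso is
   propagated along the segment from xbar to x in steps shorter than
   (delta - beta)/(1 + K), K the Lipschitz constant of P_lam f.  So the iterates stay
   in B[xbar,beta], and the descent inequality of the proximal steps telescopes
   because f is bounded below. *)

From HB Require Import structures.
From mathcomp Require Import all_boot all_order all_algebra.
From mathcomp Require Import all_classical all_reals all_analysis.
From mathcomp Require Import ring lra.
Import Order.TTheory GRing.Theory Num.Theory.
Import numFieldNormedType.Exports.
Local Open Scope classical_set_scope.
Local Open Scope ring_scope.
Set Implicit Arguments.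
Unset Strict Implicit.

Section Euclidean.
Context {R : realType} {n : nat}.
Local Notation V := 'rV[R]_n.
Implicit Types (u v w : V) (a : R).

Lemma dotvC u v : dotv u v = dotv v u.
Proof. by apply: eq_bigr => i _; rewrite mulrC. Qed.

Lemma dotvDl u v w : dotv (u + v) w = dotv u w + dotv v w.
Proof. by rewrite /dotv -big_split; apply: eq_bigr => i _; rewrite !mxE mulrDl. Qed.

Lemma dotvBl u v w : dotv (u - v) w = dotv u w - dotv v w.
Proof. by rewrite /dotv -sumrB; apply: eq_bigr => i _; rewrite !mxE mulrBl. Qed.

Lemma dotvZl a u w : dotv (a *: u) w = a * dotv u w.
Proof. by rewrite /dotv mulr_sumr; apply: eq_bigr => i _; rewrite !mxE mulrA. Qed.

Lemma dotvDr u v w : dotv w (u + v) = dotv w u + dotv w v.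
Proof. by rewrite dotvC dotvDl !(dotvC w). Qed.

Lemma dotvBr u v w : dotv w (u - v) = dotv w u - dotv w v.
Proof. by rewrite dotvC dotvBl !(dotvC w). Qed.

Lemma dotvZr a u w : dotv w (a *: u) = a * dotv w u.
Proof. by rewrite dotvC dotvZl dotvC. Qed.

Lemma dotv0r w : dotv w 0 = 0.
Proof. by rewrite /dotv big1 // => i _; rewrite mxE mulr0. Qed.

Lemma dotv_ge0 u : 0 <= dotv u u.
Proof. by apply: sumr_ge0 => i _; rewrite -expr2 sqr_ge0. Qed.

Lemma dotv_eq0 u : (dotv u u == 0) = (u == 0).
Proof.
apply/idP/eqP => [|->]; last by rewrite dotv0r.
rewrite psumr_eq0 => [/allP u0|i _]; last by rewrite -expr2 sqr_ge0.
apply/rowP => i; rewrite mxE.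
by have := u0 i (mem_index_enum i); rewrite /= mulf_eq0 orbb => /eqP.
Qed.

Lemma enorm_ge0 u : 0 <= enorm u.
Proof. exact: sqrtr_ge0. Qed.

Lemma enorm_sq u : enorm u ^+ 2 = dotv u u.
Proof. by rewrite sqr_sqrtr // dotv_ge0. Qed.

Lemma enorm_gt0 u : (0 < enorm u) = (u != 0).
Proof. by rewrite sqrtr_gt0 lt_def dotv_ge0 andbT dotv_eq0. Qed.

Lemma enorm0 : enorm (0 : V) = 0.
Proof. by rewrite /enorm dotv0r sqrtr0. Qed.

Lemma enormZ a u : enorm (a *: u) = `|a| * enorm u.
Proof. by rewrite /enorm dotvZl dotvZr mulrA -expr2 sqrtrM ?sqr_ge0 // sqrtr_sqr. Qed.

Lemma enormB u v : enorm (u - v) = enorm (v - u).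
Proof. by rewrite -opprB -scaleN1r enormZ normrN1 mul1r. Qed.

Lemma enorm_le_sq u v : (enorm u <= enorm v) = (enorm u ^+ 2 <= enorm v ^+ 2).
Proof. by rewrite ler_pXn2r // nnegrE enorm_ge0. Qed.

Lemma enormDZ_sq u v a :
  enorm (u + a *: v) ^+ 2 = enorm u ^+ 2 + 2 * a * dotv u v + a ^+ 2 * enorm v ^+ 2.
Proof. by rewrite !enorm_sq dotvDl !dotvDr !dotvZl !dotvZr (dotvC v u); ring. Qed.

Lemma cauchy_schwarz u v : dotv u v <= enorm u * enorm v.
Proof.
have [->|v0] := eqVneq v 0; first by rewrite dotv0r enorm0 mulr0.
have vv_gt0 : 0 < dotv v v by rewrite -enorm_sq exprn_gt0 // enorm_gt0.
have [uv_le0|uv_gt0] := lerP (dotv u v) 0.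
  by apply: le_trans uv_le0 _; rewrite mulr_ge0 ?enorm_ge0.
rewrite -(ler_pXn2r (n := 2)) ?nnegrE ?mulr_ge0 ?enorm_ge0 ?(ltW uv_gt0) // exprMn !enorm_sq.
have := dotv_ge0 (u - (dotv u v / dotv v v) *: v).
rewrite dotvBl !dotvBr !dotvZl !dotvZr (dotvC v u).
set t := dotv u v / dotv v v.
have -> : dotv u u - t * dotv u v - (t * dotv u v - t * (t * dotv v v))
          = dotv u u - dotv u v ^+ 2 / dotv v v.
  by rewrite /t; field; rewrite lt0r_neq0.
by rewrite subr_ge0 ler_pdivrMr.
Qed.

Lemma enormD u v : enorm (u + v) <= enorm u + enorm v.
Proof.
rewrite -(ler_pXn2r (n := 2)) ?nnegrE ?addr_ge0 ?enorm_ge0 //.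
have := enormDZ_sq u v 1; rewrite scale1r => ->.
by have := cauchy_schwarz u v; rewrite sqrrD; nra.
Qed.

Lemma enorm_triangle u v w : enorm (u - w) <= enorm (u - v) + enorm (v - w).
Proof. by apply: le_trans (enormD (u - v) (v - w)); rewrite addrA subrK. Qed.

Lemma enorm_conv a u v : 0 <= a <= 1 ->
  enorm (a *: u + (1 - a) *: v) <= a * enorm u + (1 - a) * enorm v.
Proof.
move=> /andP[a0 a1]; apply: le_trans (enormD _ _) _.
by rewrite !enormZ !ger0_norm ?subr_ge0.
Qed.

End Euclidean.

Section Balls.
Context {R : realType} {n : nat}.
Local Notation V := 'rV[R]_n.
Implicit Types (a x y : V) (r s : R).

Lemma cballxx a r : 0 <= r -> cball a r a.
Proof. by rewrite /cball /= subrr enorm0. Qed.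

Lemma cball_le a r s y : r <= s -> cball a r y -> cball a s y.
Proof. by move=> rs ry; apply: le_trans rs. Qed.

Lemma oball_cball a r y : oball a r y -> cball a r y.
Proof. exact: ltW. Qed.

Lemma cball_segment a r x s : 0 <= s <= 1 -> cball a r x -> cball a r (a + s *: (x - a)).
Proof.
move=> /andP[s0 s1]; rewrite /cball /= addrAC subrr add0r enormZ ger0_norm //.
by move=> ax; apply: le_trans ax; rewrite ler_piMl ?enorm_ge0.
Qed.

End Balls.

Section Gradient.
Context {R : realType} {n : nat}.
Local Notation V := 'rV[R]_n.
Implicit Types (F : V -> R) (x g : V).

Lemma is_gradient_approx F x g : is_gradient F x g ->
  forall e, 0 < e -> exists2 r, 0 < r & forall h : V, h != 0 -> `|h| < r ->
    `|(F (x + h) - F x - dotv g h) / enorm h| < e.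
Proof.
move=> /cvgrPdist_lt Fg e e0; have := Fg e e0.
rewrite near_withinE => /nbhs_ballP[r /= r0 Fr]; exists r => // h h0 hr.
have := Fr h; rewrite -ball_normE /= sub0r normrN => /(_ hr h0).
by rewrite sub0r normrN.
Qed.

Lemma small_multiple (d : V) (r : R) : 0 < r -> d != 0 ->
  exists t : R, [/\ 0 < t, t <= 1, t *: d != 0 & `|t *: d| < r].
Proof.
move=> r0 d0; have d_ge0 : 0 <= `|d| by [].
have t_gt0 : 0 < r / (r + `|d|) by rewrite divr_gt0 // ltr_wpDr.
exists (r / (r + `|d|)); split => //.
- by rewrite ler_pdivrMr ?mul1r ?lerDl // ltr_wpDr.
- by rewrite scaler_eq0 negb_or d0 andbT gt_eqF.
- rewrite normrZ gtr0_norm // mulrAC ltr_pdivrMr ?ltr_wpDr //.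
  by rewrite ltr_pM2l //; lra.
Qed.

Lemma convex_gradient_le (U : set V) F a b g :
  convex_fun_on U F -> U a -> U b -> is_gradient F a g ->
  F a + dotv g (b - a) <= F b.
Proof.
move=> cvx Ua Ub Fg.
have [ba0|ba0] := eqVneq (b - a) 0.
  by rewrite ba0 dotv0r addr0; move/eqP: ba0; rewrite subr_eq0 => /eqP->.
have ba_gt0 : 0 < enorm (b - a) by rewrite enorm_gt0.
apply/ler_addgt0Pr => e e0.
have [r r0 Fr] := is_gradient_approx Fg (divr_gt0 e0 ba_gt0).
have [t [t0 t1 tba0 tba_small]] := small_multiple r0 ba0.
have := Fr _ tba0 tba_small; rewrite enormZ (gtr0_norm t0) dotvZr.
have -> : a + t *: (b - a) = t *: b + (1 - t) *: a.
  by apply/rowP => i; rewrite !mxE; ring.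
rewrite ltr_norml => /andP[+ _]; rewrite ltr_pdivlMr ?mulr_gt0 //.
have -> : - (e / enorm (b - a)) * (t * enorm (b - a)) = - (e * t).
  by field; rewrite gt_eqF.
have := cvx b a Ub Ua t; rewrite t1 ltW //= => /(_ isT) cvx_t slope.
have : t * (F a + dotv g (b - a)) <= t * (F b + e) by lra.
by rewrite ler_pM2l.
Qed.

Lemma convex_gradient_monotone (U : set V) F a b ga gb :
  convex_fun_on U F -> U a -> U b -> is_gradient F a ga -> is_gradient F b gb ->
  0 <= dotv (gb - ga) (b - a).
Proof.
move=> cvx Ua Ub Fa Fb.
have := convex_gradient_le cvx Ua Ub Fa; have := convex_gradient_le cvx Ub Ua Fb.
have -> : dotv gb (a - b) = - dotv gb (b - a) by rewrite !dotvBr; ring.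
by rewrite dotvBl; lra.
Qed.

Lemma is_gradient_unique F x g1 g2 :
  is_gradient F x g1 -> is_gradient F x g2 -> g1 = g2.
Proof.
move=> Fg1 Fg2; apply/eqP; rewrite eq_sym -subr_eq0; apply/negPn/negP => d0.
have d_gt0 : 0 < enorm (g2 - g1) by rewrite enorm_gt0.
have e0 : 0 < enorm (g2 - g1) / 2 by rewrite divr_gt0.
have [r1 r10 Fr1] := is_gradient_approx Fg1 e0.
have [r2 r20 Fr2] := is_gradient_approx Fg2 e0.
have r_gt0 : 0 < Num.min r1 r2 by rewrite lt_min r10 r20.
have [t [t0 _ h0]] := small_multiple r_gt0 d0.
rewrite lt_min => /andP[hr1 hr2].
have := Fr1 _ h0 hr1; have := Fr2 _ h0 hr2.
set A := F (x + t *: (g2 - g1)) - F x.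
rewrite enormZ (gtr0_norm t0) !dotvZr; set D := t * enorm (g2 - g1).
have D_gt0 : 0 < D by rewrite mulr_gt0.
have gap : (A - t * dotv g1 (g2 - g1)) / D - (A - t * dotv g2 (g2 - g1)) / D
           = enorm (g2 - g1).
  rewrite -mulrBl (_ : _ - _ = t * dotv (g2 - g1) (g2 - g1)); last first.
    by rewrite dotvBl; ring.
  by rewrite -enorm_sq /D; field; rewrite !gt_eqF.
have := ler_normB ((A - t * dotv g1 (g2 - g1)) / D) ((A - t * dotv g2 (g2 - g1)) / D).
by rewrite gap ger0_norm ?enorm_ge0 //; lra.
Qed.

End Gradient.

Section Prox.
Context {R : realType} {n : nat}.
Local Notation V := 'rV[R]_n.
Variables (f : V -> \bar R) (mu : R).
Hypothesis mu_gt0 : 0 < mu.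

Lemma prox_le x p : prox mu f x p ->
  (f p + ((2 * mu)^-1 * enorm (p - x) ^+ 2)%:E <= f x)%E.
Proof. by move=> /(_ x); rewrite subrr enorm0 expr0n /= mulr0 adde0. Qed.

Lemma prox_fin_num x p : (forall y, -oo < f y)%E -> (exists y, f y < +oo)%E ->
  prox mu f x p -> f p \is a fin_num.
Proof.
move=> f_gt_ninfty [y fy_lt] /(_ y) pxy.
rewrite fin_numE gt_eqF ?f_gt_ninfty //= lt_eqF //.
apply: le_lt_trans (leeDl _ _) (le_lt_trans pxy _).
  by rewrite lee_fin mulr_ge0 ?sqr_ge0 // invr_ge0 mulr_ge0 // ltW.
by apply: lte_add_pinfty => //; exact: ltry.
Qed.

Lemma prox_sqr_dist_le (c : R) x p : 2 * mu <= c ->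
  f x \is a fin_num -> f p \is a fin_num -> prox mu f x p ->
  enorm (x - p) ^+ 2 <= c * (fine (f x) - fine (f p)).
Proof.
move=> muc fx fp /prox_le; rewrite -(fineK fx) -(fineK fp) -EFinD lee_fin enormB.
set D := enorm (x - p) ^+ 2 => descent.
have D_ge0 : 0 <= D by rewrite sqr_ge0.
have -> : D = 2 * mu * ((2 * mu)^-1 * D) by field; rewrite gt_eqF.
have : 0 <= (2 * mu)^-1 * D by rewrite mulr_ge0 // invr_ge0 mulr_ge0 // ltW.
have : 0 <= 2 * mu by rewrite mulr_ge0 // ltW.
by nra.
Qed.

End Prox.

Section StandingFact.
Context {R : realType} {n : nat}.
Local Notation V := 'rV[R]_n.
Variables (f : V -> \bar R) (rho : R) (xb : V) (r : R).
Hypothesis r_ge0 : 0 <= r.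
Hypothesis xb_critical : limiting_subdiff f xb 0.

Lemma standing_fact_prox_eq mu x p : standing_fact f rho xb r mu ->
  cball xb r x -> prox mu f x p -> prox mu f x = [set p].
Proof. by case=> ex _ _ _ rx; have [q ->] := ex x rx => ->. Qed.

Lemma standing_fact_prox_center mu : standing_fact f rho xb r mu -> prox mu f xb xb.
Proof. by case=> _ _ char _; rewrite (char _ (cballxx _ r_ge0)) /= subrr scaler0. Qed.

Lemma standing_fact_gradient_center mu : standing_fact f rho xb r mu ->
  is_gradient (moreau mu f) xb 0.
Proof.
move=> SF; case: (SF) => _ _ _ grad.
by have := grad _ _ (cballxx _ r_ge0) (standing_fact_prox_center SF); rewrite subrr scaler0.
Qed.

Lemma standing_fact_prox_transfer mu nu x z p :
  standing_fact f rho xb r mu -> standing_fact f rho xb r nu ->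
  cball xb r x -> cball xb r z -> mu^-1 *: (x - p) = nu^-1 *: (z - p) ->
  prox mu f x p -> prox nu f z p.
Proof.
by case=> _ _ charm _ [_ _ charn _] rx rz e; rewrite (charm _ rx) (charn _ rz) /= e.
Qed.

End StandingFact.

Lemma segment_continuation {R : realType} {n : nat} (P : 'rV[R]_n -> Prop)
    (a x : 'rV[R]_n) (eps : R) :
  0 < eps -> P a ->
  (forall s t : R, 0 <= s -> s <= t -> t <= 1 -> (t - s) * enorm (x - a) <= eps ->
     P (a + s *: (x - a)) -> P (a + t *: (x - a))) ->
  P x.
Proof.
move=> eps_gt0 Pa step.
pose N := (Num.Def.archi_bound (enorm (x - a) / eps)).+1.
have N_gt0 : 0 < N%:R :> R by rewrite ltr0n.
have step_le : N%:R^-1 * enorm (x - a) <= eps.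
  have := archi_boundP (divr_ge0 (enorm_ge0 (x - a)) (ltW eps_gt0)).
  rewrite ltr_pdivrMr // => /ltW bound_le.
  rewrite mulrC ler_pdivrMr // mulrC; apply: le_trans bound_le _.
  by rewrite ler_pM2r // ler_nat.
have Pj j : (j <= N)%N -> P (a + (j%:R / N%:R) *: (x - a)).
  elim: j => [_|j IH jN]; first by rewrite mul0r scale0r addr0.
  apply: (step (j%:R / N%:R)) (IH (ltnW jN)).
  - by rewrite divr_ge0.
  - by rewrite ler_pM2r ?invr_gt0 // ler_nat.
  - by rewrite ler_pdivrMr // mul1r ler_nat.
  - by rewrite -mulrBl -natrB // subSnn div1r.
by have := Pj N (leqnn N); rewrite divff ?gt_eqF // scale1r addrC subrK.
Qed.

(* The point z^k of step (a), determined by x^k and x^{k+1} = P_lam f(x^k). *)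
Definition zpoint {R : realType} {n : nat} (gam lam : R) (x p : 'rV[R]_n) : 'rV[R]_n :=
  (gam / lam) *: x + (1 - gam / lam) *: p.

Section AlgorithmStep.
Context {R : realType} {n : nat}.
Local Notation V := 'rV[R]_n.
Context {f : V -> \bar R} {rho : R} {xb : V} {delta beta gam lam : R}.
Implicit Types x p y z : V.
Hypothesis rho_gt0 : 0 < rho.
Hypothesis gam_gt0 : 0 < gam.
Hypothesis gam_lam : 2 * gam < lam.
Hypothesis lam_rho : lam < rho^-1.
Hypothesis beta_gt0 : 0 < beta.
Hypothesis beta_delta : beta < delta.
Hypothesis SFg : standing_fact f rho xb delta gam.
Hypothesis SFl : standing_fact f rho xb delta lam.
Hypothesis e_gam_convex : convex_fun_on (cball xb delta) (moreau gam f).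
Hypothesis xb_critical : limiting_subdiff f xb 0.

Let lam_gt0 : 0 < lam. Proof. by move: gam_gt0 gam_lam; lra. Qed.
Let delta_ge0 : 0 <= delta. Proof. by move: beta_gt0 beta_delta; lra. Qed.
Let ratio_ge0 : 0 <= gam / lam. Proof. by rewrite divr_ge0 // ltW. Qed.
Let ratio_le1 : gam / lam <= 1.
Proof. by rewrite ler_pdivrMr // mul1r; move: gam_gt0 gam_lam; lra. Qed.

Lemma zpointB x1 p1 x2 p2 : zpoint gam lam x1 p1 - zpoint gam lam x2 p2 =
  (gam / lam) *: (x1 - x2) + (1 - gam / lam) *: (p1 - p2).
Proof. by apply/rowP => i; rewrite !mxE; ring. Qed.

Lemma enorm_zpointB x1 p1 x2 p2 :
  enorm (zpoint gam lam x1 p1 - zpoint gam lam x2 p2) <= enorm (x1 - x2) + enorm (p1 - p2).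
Proof.
rewrite zpointB; apply: le_trans (enorm_conv _ _ _) _; first by rewrite ratio_ge0.
by have := enorm_ge0 (x1 - x2); have := enorm_ge0 (p1 - p2); move: ratio_ge0 ratio_le1; nra.
Qed.

Lemma zpoint_dist_le x p : enorm (p - xb) <= enorm (x - xb) ->
  enorm (zpoint gam lam x p - xb) <= enorm (x - xb).
Proof.
move=> px; have {1}-> : xb = zpoint gam lam xb xb by apply/rowP => i; rewrite !mxE; ring.
rewrite zpointB; apply: le_trans (enorm_conv _ _ _) _; first by rewrite ratio_ge0.
have : (1 - gam / lam) * enorm (p - xb) <= (1 - gam / lam) * enorm (x - xb).
  by rewrite ler_wpM2l // subr_ge0.
lra.
Qed.

Lemma zpoint_gradient x p : gam^-1 *: (zpoint gam lam x p - p) = lam^-1 *: (x - p).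
Proof. by apply/rowP => i; rewrite !mxE; field; rewrite !gt_eqF. Qed.

Lemma prox_zpoint x p : cball xb delta x -> prox lam f x p ->
  cball xb delta (zpoint gam lam x p) -> prox gam f (zpoint gam lam x p) p.
Proof.
move=> bx px bz; apply: standing_fact_prox_transfer SFl SFg bx bz _ px.
by rewrite zpoint_gradient.
Qed.

Lemma gradient_zpoint x p : cball xb delta x -> prox lam f x p ->
  cball xb delta (zpoint gam lam x p) ->
  is_gradient (moreau gam f) (zpoint gam lam x p) (lam^-1 *: (x - p)).
Proof.
move=> bx px bz; case: SFg => _ _ _ grad.
by rewrite -zpoint_gradient; apply: grad bz (prox_zpoint bx px bz).
Qed.

Lemma prox_dist_le x p : cball xb delta x -> prox lam f x p ->
  cball xb delta (zpoint gam lam x p) -> enorm (p - xb) <= enorm (x - xb).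
Proof.
move=> bx px bz.
have := convex_gradient_monotone e_gam_convex (cballxx _ delta_ge0) bz
  (standing_fact_gradient_center delta_ge0 xb_critical SFg) (gradient_zpoint bx px bz).
rewrite subr0; set g := lam^-1 *: (x - p); set u := zpoint gam lam x p - xb => mono.
have -> : x - xb = u + (lam - gam) *: g.
  by apply/rowP => i; rewrite !mxE; field; rewrite gt_eqF.
have -> : p - xb = u + (- gam) *: g.
  by apply/rowP => i; rewrite !mxE; field; rewrite gt_eqF.
rewrite enorm_le_sq !enormDZ_sq (dotvC u g).
have : 0 <= lam * (lam - 2 * gam) * enorm g ^+ 2.
  by rewrite mulr_ge0 ?sqr_ge0 // mulr_ge0 ?ltW // subr_gt0.
have : 0 <= lam * dotv g u by rewrite mulr_ge0 // ltW.
by lra.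
Qed.

Lemma prox_dist_le_propagate y y' p :
  cball xb beta y -> cball xb beta y' ->
  (1 + (1 - lam * rho)^-1) * enorm (y' - y) <= delta - beta ->
  prox lam f y p -> enorm (p - xb) <= enorm (y - xb) ->
  exists2 p', prox lam f y' p' & enorm (p' - xb) <= enorm (y' - xb).
Proof.
have beta_le : beta <= delta by exact: ltW.
move=> by_ by' small py py_le; case: (SFl) => ex lip _ _.
have [p' prox_p'] := ex y' (cball_le beta_le by').
have py' : prox lam f y' p' by rewrite prox_p'.
exists p' => //; apply: (prox_dist_le (cball_le beta_le by') py').
have := lip _ _ _ _ (cball_le beta_le by') (cball_le beta_le by_) py' py.
have := enorm_zpointB y' p' y p; have := zpoint_dist_le py_le.
have := enorm_triangle (zpoint gam lam y' p') (zpoint gam lam y p) xb.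
by rewrite /cball /=; move: small (by_ : enorm (y - xb) <= beta); lra.
Qed.

Lemma exists_prox_dist_le x : cball xb beta x ->
  exists2 p, prox lam f x p & enorm (p - xb) <= enorm (x - xb).
Proof.
move=> bx; set K := (1 - lam * rho)^-1.
have K_gt0 : 0 < K by rewrite invr_gt0 subr_gt0 -ltr_pdivlMr // div1r.
pose P y := exists2 p, prox lam f y p & enorm (p - xb) <= enorm (y - xb).
apply: (@segment_continuation _ _ P xb x ((delta - beta) / (1 + K))).
- by rewrite divr_gt0 ?subr_gt0 //; lra.
- exists xb; first exact: (standing_fact_prox_center delta_ge0 xb_critical SFl).
  by rewrite subrr enorm0.
move=> s t s0 st t1 step [p px pxb].
have s01 : 0 <= s <= 1 by rewrite s0; lra.
have t01 : 0 <= t <= 1 by apply/andP; split; lra.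
apply: prox_dist_le_propagate (cball_segment s01 bx) (cball_segment t01 bx) _ px pxb.
have -> : xb + t *: (x - xb) - (xb + s *: (x - xb)) = (t - s) *: (x - xb).
  by apply/rowP => i; rewrite !mxE; ring.
by rewrite enormZ ger0_norm ?subr_ge0 // mulrC -ler_pdivlMr // addr_gt0.
Qed.

Lemma step_a_exists x : cball xb beta x -> exists z, step_a f xb delta gam lam x z.
Proof.
move=> bx; have [p px pxb] := exists_prox_dist_le bx.
have bz : cball xb beta (zpoint gam lam x p) by apply: le_trans (zpoint_dist_le pxb) bx.
exists (zpoint gam lam x p); split; first exact: le_lt_trans bz beta_delta.
exists (lam^-1 *: (x - p)); split.
  exact: gradient_zpoint (cball_le (ltW beta_delta) bx) px (cball_le (ltW beta_delta) bz).
by apply/rowP => i; rewrite !mxE; field; rewrite gt_eqF.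
Qed.

Lemma step_a_prox x z : cball xb beta x -> step_a f xb delta gam lam x z ->
  prox lam f x = [set z - (gam / (lam - gam)) *: (x - z)] /\
  cball xb beta (z - (gam / (lam - gam)) *: (x - z)).
Proof.
move=> bx [oz [g [gz ez]]].
have bxd := cball_le (ltW beta_delta) bx; have bzd := oball_cball oz.
have lam_gam : lam - gam != 0 by rewrite gt_eqF // subr_gt0; move: gam_gt0 gam_lam; lra.
case: (SFg) => ex _ _ grad.
have [q prox_q] := ex z bzd; have pzq : prox gam f z q by rewrite prox_q.
have g_eq : g = gam^-1 *: (z - q) := is_gradient_unique gz (grad _ _ bzd pzq).
have x_eq : x = z + (lam - gam) *: (gam^-1 *: (z - q)) by rewrite -g_eq ez subrK.
have -> : z - (gam / (lam - gam)) *: (x - z) = q.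
  by rewrite x_eq; apply/rowP => i; rewrite !mxE; field; rewrite lam_gam gt_eqF.
have pxq : prox lam f x q.
  apply: (standing_fact_prox_transfer SFg SFl bzd bxd _ pzq).
  by rewrite x_eq; apply/rowP => i; rewrite !mxE; field; rewrite !gt_eqF.
have z_eq : zpoint gam lam x q = z.
  by rewrite x_eq; apply/rowP => i; rewrite !mxE; field; rewrite !gt_eqF.
split; first exact: standing_fact_prox_eq SFl bxd pxq.
by apply: le_trans (prox_dist_le bxd pxq _) bx; rewrite z_eq.
Qed.

End AlgorithmStep.

Lemma telescoping_series_lt_pinfty {R : realType} (d F : nat -> R) (c m : R) :
  (forall k, 0 <= d k) -> (forall k, m <= F k) -> 0 <= c ->
  (forall k, d k.+1 <= c * (F k - F k.+1)) ->
  (\sum_(0 <= k <oo) (d k)%:E < +oo)%E.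
Proof.
move=> d_ge0 F_ge c_ge0 d_le.
have partial N : \sum_(0 <= k < N.+1) d k + c * F N <= d 0%N + c * F 0%N.
  elim: N => [|N IH]; first by rewrite big_nat1.
  by rewrite big_nat_recr //=; have := d_le N; lra.
apply: (@le_lt_trans _ _ (d 0%N + c * (F 0%N - m))%:E); last exact: ltry.
apply: lime_le; first by apply: is_cvg_ereal_nneg_natsum => k _; rewrite lee_fin.
apply: nearW => N; rewrite sumEFin lee_fin.
have : \sum_(0 <= k < N) d k <= \sum_(0 <= k < N.+1) d k.
  by rewrite big_nat_recr //= lerDl.
have := partial N; have : c * m <= c * F N by rewrite ler_wpM2l.
lra.
Qed.

Unset Implicit Arguments.

Theorem proposition4p1 (R : realType) (n : nat) (f : 'rV[R]_n -> \bar R)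
  (rho : R) (xbar : 'rV[R]_n) (lbar delta beta : R) (gam lam sig : nat -> R) :
  (exists x, f x < +oo)%E -> (forall x, -oo < f x)%E ->
  lower_semicontinuous f ->
  (exists m : R, forall x, (m%:E <= f x)%E) ->
  0 < rho -> weakly_convex_on rho setT f ->
  (f xbar < +oo)%E -> limiting_subdiff f xbar 0 ->
  0 < lbar ->
  (forall k, lbar < 2 * gam k /\ 2 * gam k < lam k /\ lam k < rho^-1) ->
  (exists M : R, forall k, `|gam k| <= M /\ `|lam k| <= M) ->
  0 < delta ->
  (forall k, standing_fact f rho xbar delta (gam k) /\
             standing_fact f rho xbar delta (lam k)) ->
  (forall k, convex_fun_on (cball xbar delta) (moreau (gam k) f) /\
             convex_fun_on (cball xbar delta) (moreau (lam k) f)) ->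
  (forall k, 0 < sig k < 2 / Lconst rho (gam k) (lam k) ^+ 2) ->
  0 < beta ->
  (forall k, beta < delta /\
     beta < delta / sig k * (1 - Num.sqrt (kappa rho (gam k) (lam k) (sig k)))) ->
  (forall k x, cball xbar beta x ->
     exists z, step_a f xbar delta (gam k) (lam k) x z) /\
  (forall x z : nat -> 'rV[R]_n,
     cball xbar beta (x 0%N) ->
     (forall k, cball xbar beta (x k) ->
        step_a f xbar delta (gam k) (lam k) (x k) (z k) /\
        x k.+1 = z k - (gam k / (lam k - gam k)) *: (x k - z k)) ->
     (forall k, prox (lam k) f (x k) = [set x k.+1] /\ cball xbar beta (x k)) /\
     (\sum_(0 <= k <oo) ((enorm (x k - x k.+1)) ^+ 2)%:E < +oo)%E).
Proof.
move=> f_proper f_gt_ninfty _ [m f_ge_m] rho_gt0 _ _ xbar_critical lbar_gt0 params _ _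
  SF CVX _ beta_gt0 beta_lt.
have beta_delta : beta < delta by case: (beta_lt 0%N).
have step_hyps k : [/\ 0 < gam k, 2 * gam k < lam k & lam k < rho^-1].
  by case: (params k) => [lbar_gam [gam_lam lam_rho]]; split => //; lra.
split=> [k x bx | x z bx0 run].
  case: (step_hyps k) (SF k) (CVX k) => gam_gt0 gam_lam lam_rho [SFg SFl] [cvx _].
  by apply: (step_a_exists (rho := rho) (beta := beta)).
have prox_run k : cball xbar beta (x k) ->
    prox (lam k) f (x k) = [set x k.+1] /\ cball xbar beta (x k.+1).
  move=> bx; case: (run k bx) => stepa ->.
  case: (step_hyps k) (SF k) (CVX k) => gam_gt0 gam_lam lam_rho [SFg SFl] [cvx _].
  by apply: (step_a_prox (rho := rho) (delta := delta)).
have bx k : cball xbar beta (x k) by elim: k => // k /prox_run[].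
have px k : prox (lam k) f (x k) (x k.+1) by rewrite (proj1 (prox_run k (bx k))).
split=> [k|]; first by split; [exact: (proj1 (prox_run k (bx k)))|].
have lam_gt0 k : 0 < lam k by case: (step_hyps k) => *; lra.
have fin k := prox_fin_num (lam_gt0 k) f_gt_ninfty f_proper (px k).
apply: (@telescoping_series_lt_pinfty _ (fun k => enorm (x k - x k.+1) ^+ 2)
  (fun k => fine (f (x k.+1))) (2 / rho) m).
- by move=> k; rewrite sqr_ge0.
- by move=> k; rewrite -lee_fin fineK.
- by rewrite divr_ge0 // ltW.
- move=> k; apply: prox_sqr_dist_le (px k.+1) => //.
  case: (step_hyps k.+1) => gam_gt0 gam_lam lam_rho.
  by rewrite ler_pM2l // ltW.
Qed.
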